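(* Every set strongly star Hurewicz space $X$ that is hereditarily metacompact (every subspace of $X$ is metacompact) is a Hurewicz space.
   Context: For a subset $A$ of a space $X$ and a collection $\mathcal{U}$ of subsets of $X$, ${\rm St}(A,\mathcal{U}) = \bigcup\{U \in \mathcal{U}: U \cap A \neq \emptyset\}$. A space is metacompact if every open cover has a point-finite open refinement. A space $X$ is Hurewicz if for each sequence $(\mathcal{U}_n: n \in \mathbb{N})$ of open covers of $X$ there are finite $\mathcal{V}_n \subset \mathcal{U}_n$ such that each $x \in X$ lies in $\bigcup\mathcal{V}_n$ for all but finitely many $n$. $X$ is set strongly star Hurewicz if for each nonempty $A \subset X$ and each sequence $(\mathcal{U}_n: n\in\mathbb{N})$ of collections of sets open in $X$ with $\overline{A} \subset \bigcup\mathcal{U}_n$ for all $n$, there are finite sets $F_n \subset \overline{A}$ such that each $x \in A$ lies in ${\rm St}(F_n,\mathcal{U}_n)$ for all but finitely many $n$. *)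

From HB Require Import structures.
From mathcomp Require Import all_boot all_order.
From mathcomp Require Import all_classical all_reals topology.
Set Implicit Arguments. Unset Strict Implicit. Unset Printing Implicit Defensive.
Local Open Scope classical_set_scope.

Section Defs.
Context {X : topologicalType}.

Definition relopen (Y W : set X) : Prop := exists2 U : set X, open U & W = U `&` Y.

Definition metacompact_in (Y : set X) : Prop :=
  forall C : set (set X),
    (forall W, C W -> relopen Y W) -> Y `<=` \bigcup_(W in C) W ->
    exists D : set (set X),
      [/\ (forall V, D V -> relopen Y V),
          Y `<=` \bigcup_(V in D) V,
          (forall V, D V -> exists2 W, C W & V `<=` W) &
          (forall y, Y y -> finite_set [set V | D V /\ V y])].

Definition hereditarily_metacompact : Prop := forall Y : set X, metacompact_in Y.

Definition St (A : set X) (U : set (set X)) : set X :=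
  \bigcup_(W in [set W | U W /\ W `&` A !=set0]) W.

Definition open_cover (U : set (set X)) : Prop :=
  (forall W, U W -> open W) /\ setT `<=` \bigcup_(W in U) W.

Definition hurewicz : Prop :=
  forall U : nat -> set (set X), (forall n, open_cover (U n)) ->
  exists V : nat -> set (set X),
    (forall n, finite_set (V n) /\ V n `<=` U n) /\
    (forall x : X, exists N, forall n, (N <= n)%N -> (\bigcup_(W in V n) W) x).

Definition set_strongly_star_hurewicz : Prop :=
  forall (A : set X) (U : nat -> set (set X)),
    A !=set0 ->
    (forall n, (forall W, U n W -> open W) /\ closure A `<=` \bigcup_(W in U n) W) ->
    exists F : nat -> set X,
      (forall n, finite_set (F n) /\ F n `<=` closure A) /\
      (forall x, A x -> exists N, forall n, (N <= n)%N -> St (F n) (U n) x).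

End Defs.

From mathcomp Require Import all_boot all_order.
From mathcomp Require Import all_classical all_reals topology.
Local Open Scope classical_set_scope.

(* Given open covers U n,
   replace each U n by a point-finite open refinement D n, and apply the set
   strongly star Hurewicz property to A = X (whose closure is X) and the
   covers D n: this yields finite sets F n such that every point lies in
   St(F n, D n) from some index on.  Since D n is point-finite and F n is
   finite, only finitely many members of D n meet F n; each of them lies in
   some member of U n, and these finitely many members of U n cover
   St(F n, D n).  They form the required Hurewicz selection. *)

Section PointFiniteStars.
Context {X : topologicalType}.

Lemma relopen_setT (V : set X) : relopen setT V <-> open V.
Proof.
split; first by case=> W oW ->; rewrite setIT.
by move=> oV; exists V => //; rewrite setIT.
Qed.

Lemma metacompact_refinement (U : set (set X)) :
  metacompact_in [set: X] -> open_cover U ->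
  exists D : set (set X),
    [/\ open_cover D,
        (forall V, D V -> exists2 W, U W & V `<=` W) &
        (forall y, finite_set [set V | D V /\ V y])].
Proof.
move=> mc [Uop Ucov].
have [|//|D [Dop Dcov Dref Dfin]] := mc U.
  by move=> W /Uop /relopen_setT.
exists D; split => // [|y]; last exact: Dfin.
by split=> // V /Dop /relopen_setT.
Qed.

(* The members of a point-finite family meeting a finite set are finitely
   many; this is what makes stars of finite sets "small". *)
Lemma point_finite_meeting (D : set (set X)) (F : set X) :
  finite_set F -> (forall y, finite_set [set V | D V /\ V y]) ->
  finite_set [set V | D V /\ V `&` F !=set0].
Proof.
move=> Ffin Dfin.
apply: (sub_finite_set _ (bigcup_finite Ffin (fun y _ => Dfin y))).
by move=> V [DV [y [Vy Fy]]]; exists y => //.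
Qed.

Lemma finite_star_cover {U D : set (set X)} {F : set X} :
  (forall V, D V -> exists2 W, U W & V `<=` W) ->
  (forall y, finite_set [set V | D V /\ V y]) -> finite_set F ->
  exists2 V : set (set X), finite_set V /\ V `<=` U &
    St F D `<=` \bigcup_(W in V) W.
Proof.
move=> Dref Dfin Ffin.
have /choice[g Hg] : forall V, exists W, D V -> U W /\ V `<=` W.
  move=> V; have [DV|nDV] := pselect (D V); last by exists set0.
  by have [W UW VW] := Dref V DV; exists W.
exists (g @` [set V | D V /\ V `&` F !=set0]).
  split; first exact/finite_image/point_finite_meeting.
  by move=> _ [V [DV _] <-]; case: (Hg V DV).
move=> x [V [DV VF] Vx]; exists (g V); first by exists V.
by case: (Hg V DV) => _; apply.
Qed.

End PointFiniteStars.

Theorem mainTheorem3 (X : topologicalType) :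
  @set_strongly_star_hurewicz X -> @hereditarily_metacompact X -> @hurewicz X.
Proof.
move=> ssh hm U Ucov.
(* The set strongly star Hurewicz property needs a nonempty set A = X. *)
have [[x0 _]|X0] := pselect (exists x : X, True); last first.
  exists (fun=> set0); split=> [n|x]; first by split; [exact: finite_set0|].
  by exfalso; apply: X0; exists x.
have [D HD] := choice (fun n => metacompact_refinement (U n) (hm setT) (Ucov n)).
have [F [Ffin Fstar]] : exists F : nat -> set X,
    (forall n, finite_set (F n) /\ F n `<=` closure setT) /\
    (forall x, setT x -> exists N, forall n, (N <= n)%N -> St (F n) (D n) x).
  apply: ssh => [|n]; first by exists x0.
  by have [[Dop Dcov] _ _] := HD n; rewrite closureT; split.
have /choice[V HV] : forall n, exists V : set (set X),
    (finite_set V /\ V `<=` U n) /\ St (F n) (D n) `<=` \bigcup_(W in V) W.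
  move=> n; have [_ Dref Dfin] := HD n.
  have [V Vfin Vcov] := finite_star_cover Dref Dfin (proj1 (Ffin n)).
  by exists V; split.
exists V; split=> [n|x]; first by case: (HV n).
have [N HN] := Fstar x I; exists N => n /HN.
by case: (HV n) => _ Vcov /Vcov.
Qed.
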